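(* Let $p,q,r$ be integers with $1<p<q<r$, $p$ odd and $pq+pr-qr=1$. Then $p+1\le q\le 2p-1$. *)

From Stdlib Require Import ZArith Lia.

(* Shifting by p turns the equation into (q - p)(r - p) = p^2 - 1 < p^2. *)
From Stdlib Require Import ZArith Lia.
Open Scope Z_scope.

Lemma shifted_factorization (p q r : Z) :
  p * q + p * r - q * r = 1 -> (q - p) * (r - p) = p * p - 1.
Proof. intros heq. nia. Qed.

Lemma smaller_factor_lt_sqrt (a b n : Z) :
  0 <= a <= b -> 0 <= n -> a * b < n * n -> a < n.
Proof. intros hab hn hlt. nia. Qed.

Theorem lemma3p1 (p q r : Z)
  (h1p : 1 < p) (hpq : p < q) (hqr : q < r)
  (hodd : Z.Odd p)
  (heq : p * q + p * r - q * r = 1) :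
  p + 1 <= q <= 2 * p - 1.
Proof.
  assert (hprod := shifted_factorization p q r heq).
  assert (hqp : q - p < p).
  { apply smaller_factor_lt_sqrt with (b := r - p); lia. }
  lia.
Qed.
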